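(* If $Q\in\mathcal{A}^{(0)}$, then $Q=c\,\mathcal{D}+\mathcal{L}$ for some $c\in\mathbb{R}$, where $\mathcal{D}=w\,\partial/\partial w+\sum_{j=1}^n\delta_jz_j\,\partial/\partial z_j$ and $\mathcal{L}=\sum_{j=1}^n \ell_j(z_1,\dots,z_n)\partial/\partial z_j$ is a vector field independent of $w$ with no $\partial/\partial w$ component.
   Context: Coordinates $(w,z)=(z_0,z_1,\dots,z_n)\in\mathbb{C}\times\mathbb{C}^n$, $w=u+iv$. Weights: $\delta_0=1$ for $w$, $\delta_j=1/(2m_j)$ ($m_j$ positive integers) for $z_j$; $\mathrm{wt}(z^J)=\sum_k j_k\delta_k$, $\mathrm{wt}(z^J\bar z^K)=\mathrm{wt}\,J+\mathrm{wt}\,K$. A holomorphic polynomial vector field $Q=\sum_{k=0}^n q_k\partial/\partial z_k$ is homogeneous of weight $\mu$ if each $q_k$ is zero or homogeneous of weight $\mu-\delta_k$. Standing assumptions: $p(z,\bar z)=\sum c_{A,B}z^A\bar z^B$ is a real polynomial on $\mathbb{C}^n$, homogeneous of weight 1, with no purely holomorphic or purely antiholomorphic monomials. $\Omega_{hom}=\{v+p(z,\bar z)<0\}$, and $\mathcal{A}^{(\mu)}$ is the set of holomorphic vector fields $Q=q_0\partial/\partial w+\sum_{j=1}^nq_j\partial/\partial z_j$ homogeneous of weight $\mu$ with $\mathrm{Re}\big(-\tfrac{i}{2}q_0+\sum_j q_j\partial p/\partial z_j\big)=0$ on $\partial\Omega_{hom}$. *)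

From HB Require Import structures.
From mathcomp Require Import all_boot all_order all_algebra.
From mathcomp Require Import reals.
From mathcomp.real_closed Require Import complex.
From mathcomp.multinomials Require Import mpoly.

Set Implicit Arguments.
Unset Strict Implicit.
Unset Printing Implicit Defensive.

Import Order.TTheory GRing.Theory Num.Theory.
Local Open Scope ring_scope.

(* Coordinates (w, z_1, ..., z_n) are indexed by 'I_n.+1:
   index ord0 is w = z_0, index (lift ord0 j) is z_{j+1}, for j : 'I_n.
   The exponents m_j are given by mexp : 'I_n -> nat (assumed positive). *)

Definition delta (n : nat) (mexp : 'I_n -> nat) (k : 'I_n.+1) : rat :=
  match unlift ord0 k with
  | None => 1
  | Some j => ((2 * mexp j)%N%:R)^-1
  end.

Definition wtm (n : nat) (mexp : 'I_n -> nat) (a : 'X_{1..n.+1}) : rat :=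
  \sum_(k < n.+1) (a k)%:R * delta mexp k.

Definition whomog (R : realType) (n : nat) (mexp : 'I_n -> nat) (mu : rat)
  (q : {mpoly R[i][n.+1]}) : Prop :=
  forall a, a \in msupp q -> wtm mexp a = mu.

(* The polynomial p(z, zbar) is represented as a polynomial in 2n variables:
   index (lshift n j) is z_j, index (rshift n j) is zbar_j. *)
Definition wtm2 (n : nat) (mexp : 'I_n -> nat) (a : 'X_{1..n + n}) : rat :=
  \sum_(j < n) ((a (lshift n j))%:R + (a (rshift n j))%:R)
                  * ((2 * mexp j)%N%:R)^-1.

Definition zzbar (R : realType) (n : nat) (z : 'I_n -> R[i]) : 'I_(n + n) -> R[i] :=
  fun k => match split k with inl j => z j | inr j => ((z j)^*)%C end.

Definition zpart (R : realType) (n : nat) (x : 'I_n.+1 -> R[i]) : 'I_n -> R[i] :=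
  fun j => x (lift ord0 j).

(* Standing assumptions on p: real-valued, homogeneous of weight 1,
   no purely holomorphic or purely antiholomorphic monomials. *)
Definition admissible_p (R : realType) (n : nat) (mexp : 'I_n -> nat)
  (p : {mpoly R[i][n + n]}) : Prop :=
  [/\ (forall z : 'I_n -> R[i], complex.Im (p.@[zzbar z]) = 0),
      (forall a, a \in msupp p -> wtm2 mexp a = 1) &
      (forall a, a \in msupp p ->
         (exists j : 'I_n, (0 < a (lshift n j))%N) /\
         (exists j : 'I_n, (0 < a (rshift n j))%N))].

(* boundary of Omega_hom = {v + p(z, zbar) < 0}: the hypersurface v + p = 0 *)
Definition bdry_Omega (R : realType) (n : nat) (p : {mpoly R[i][n + n]})
  (x : 'I_n.+1 -> R[i]) : Prop :=
  (real_complex R (complex.Im (x ord0))) + p.@[zzbar (zpart x)] = 0.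

(* The set A^(mu): holomorphic polynomial vector fields
   Q = q_0 d/dw + sum_j q_j d/dz_j, homogeneous of weight mu
   (q_k zero or homogeneous of weight mu + delta_k), with
   Re(-i/2 q_0 + sum_j q_j dp/dz_j) = 0 on the boundary of Omega_hom. *)
Definition in_A (R : realType) (n : nat) (mexp : 'I_n -> nat)
  (p : {mpoly R[i][n + n]}) (mu : rat) (q : 'I_n.+1 -> {mpoly R[i][n.+1]}) : Prop :=
  (forall k, whomog mexp (mu + delta mexp k) (q k)) /\
  (forall x : 'I_n.+1 -> R[i], bdry_Omega p x ->
     complex.Re (- ('i%C / 2%:R) * (q ord0).@[x]
         + \sum_(j < n) (q (lift ord0 j)).@[x]
                         * (p^`M(lshift n j)).@[zzbar (zpart x)]) = 0).

(* By the weights, q_0 = c w + f(z) with f of weight 1, and no q_j depends on w.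
   Let N = prod_j 2 m_j and e_j = N / (2 m_j), and evaluate the tangency form at the
   boundary points over the circle orbit z_j -> u^(e_j) z_j, |u| = 1.  There it equals
   conj(u)^N H(u) for a polynomial H of degree at most 2N, to which f contributes
   -i/2 f(z) u^(2N).  Every other term contains p or one of its derivatives, and as p
   has neither purely holomorphic nor purely antiholomorphic monomials, these terms
   only produce powers u^a with 0 < a < 2N.  A polynomial with Re(conj(u)^N H(u)) = 0
   on the circle satisfies H_(2N) = -conj(H_0) = 0, so f vanishes.  Comparing two
   boundary points that differ only in Re w then shows that c is real. *)

From HB Require Import structures.
From mathcomp Require Import all_boot all_order all_algebra.
From mathcomp Require Import reals.
From mathcomp.real_closed Require Import complex.
From mathcomp.multinomials Require Import mpoly.
From mathcomp Require Import zify ring.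
Import Order.TTheory GRing.Theory Num.Theory.
Local Open Scope ring_scope.
Set Implicit Arguments.
Unset Strict Implicit.
Unset Printing Implicit Defensive.

Lemma poly_eq0_of_roots (F : idomainType) (P : {poly F}) (r : nat -> F) :
  injective r -> (forall k, root P (r k)) -> P = 0.
Proof.
move=> r_inj P_r; apply: (@roots_geq_poly_eq0 _ _ (mkseq r (size P))).
- by apply/allP => x /mapP [k _ ->].
- by rewrite map_inj_uniq ?iota_uniq.
- by rewrite size_mkseq.
Qed.

Lemma digits_inj (B k : nat) (a b : 'I_k -> nat) :
  (forall i, a i < B)%N -> (forall i, b i < B)%N ->
  (\sum_(i < k) a i * B ^ i = \sum_(i < k) b i * B ^ i)%N -> a =1 b.
Proof.
elim: k a b => [|k IHk] a b a_lt b_lt; first by move=> _ [].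
rewrite !big_ord_recl !expn0 !muln1.
under eq_bigr do rewrite expnS mulnCA.
under [in X in _ = X -> _]eq_bigr do rewrite expnS mulnCA.
rewrite -!big_distrr /= => eq_ab.
have eq0 : a ord0 = b ord0.
  move: (congr1 (modn^~ B) eq_ab) => /=.
  by rewrite !(addnC (_ ord0)) !(mulnC B) !modnMDl !modn_small.
have B_gt0 : (0 < B)%N by apply: leq_ltn_trans (a_lt ord0).
move: eq_ab; rewrite eq0 => /addnI /eqP; rewrite eqn_pmul2l // => /eqP eq_lift.
have := IHk (a \o lift ord0) (b \o lift ord0) (fun i => a_lt _) (fun i => b_lt _) eq_lift.
by move=> eq_ab i; case: (unliftP ord0 i) => [j ->|->] //; apply: eq_ab.
Qed.

Lemma mpoly_eq0_of_meval0 (R : numDomainType) k (g : {mpoly R[k]}) :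
  (forall x, g.@[x] = 0) -> g = 0.
Proof.
(* Kronecker substitution x_i = t^(B^i), where B bounds every exponent of g. *)
move=> g0; pose B := msize g.
have lt_B m i : m \in msupp g -> (m i < B)%N.
  by move=> /msize_mdeg_lt; apply: leq_ltn_trans; rewrite mdegE (bigD1 i) //= leq_addr.
pose code (m : 'X_{1..k}) := (\sum_(i < k) m i * B ^ i)%N.
pose P : {poly R} := \sum_(m <- msupp g) g@_m *: 'X^(code m).
have P0 : P = 0.
  apply: (@poly_eq0_of_roots _ _ (fun t => t%:R)) => [s t /eqP|t].
    by rewrite eqr_nat => /eqP.
  apply/rootP; rewrite -(g0 (fun i => t%:R ^+ (B ^ i))) mevalE horner_sum.
  apply: eq_bigr => m _; rewrite hornerZ hornerXn -prodrXr; congr (_ * _).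
  by apply: eq_bigr => i _; rewrite -exprM mulnC.
apply/mpolyP => m; rewrite mcoeff0.
have [m_g|] := boolP (m \in msupp g); last by rewrite mcoeff_msupp negbK => /eqP.
have := congr1 (fun P : {poly R} => P`_(code m)) P0.
rewrite /= coef0 coef_sum (bigD1_seq m) ?msupp_uniq //= coefZ coefXn eqxx mulr1.
rewrite big_seq_cond big1 ?addr0 // => m' /andP[m'_g ne].
rewrite coefZ coefXn; case: eqP => [/digits_inj eq_m|]; last by rewrite mulr0.
by case/eqP: ne; apply/mnmP => i; rewrite (eq_m (lt_B m ^~ m_g) (lt_B m' ^~ m'_g)).
Qed.

Section WeightedEvaluation.
Variables (R : comNzRingType) (k : nat).
Implicit Types (g : {mpoly R[k]}) (al be : 'I_k -> nat) (y : 'I_k -> R) (u v : R).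

Definition wdeg al (m : 'X_{1..k}) : nat := (\sum_(i < k) m i * al i)%N.

Lemma wdegD al m1 m2 : wdeg al (m1 + m2)%MM = (wdeg al m1 + wdeg al m2)%N.
Proof. by rewrite /wdeg -big_split; apply: eq_bigr => i _; rewrite mnmDE mulnDl. Qed.

Lemma wdegU al i : wdeg al U_(i)%MM = al i.
Proof.
rewrite /wdeg (bigD1 i) //= mnm1E eqxx mul1n big1 ?addn0 // => j ne_ji.
by rewrite mnm1E eq_sym (negbTE ne_ji).
Qed.

Lemma wdeg_double al m : wdeg (fun i => (al i).*2) m = (wdeg al m).*2.
Proof. by rewrite /wdeg -mul2n big_distrr; apply: eq_bigr => i _; rewrite -mul2n mulnCA. Qed.

Lemma prod_scale al y u (m : 'X_{1..k}) :
  \prod_i (u ^+ al i * y i) ^+ m i = u ^+ wdeg al m * \prod_i y i ^+ m i.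
Proof.
rewrite -prodrXr -big_split; apply: eq_bigr => i _.
by rewrite exprMn -exprM mulnC.
Qed.

Lemma meval_scale al be y u v g :
  g.@[fun i => u ^+ al i * v ^+ be i * y i] =
  \sum_(m <- msupp g) g@_m * \prod_i y i ^+ m i * (u ^+ wdeg al m * v ^+ wdeg be m).
Proof.
rewrite mevalE; apply: eq_bigr => m _.
under eq_bigr do rewrite -mulrA.
rewrite prod_scale prod_scale; ring.
Qed.

Lemma meval_homog al y u g d : {in msupp g, forall m, wdeg al m = d} ->
  g.@[fun i => u ^+ al i * y i] = u ^+ d * g.@[y].
Proof.
move=> g_hom; rewrite !mevalE mulr_sumr; apply: eq_big_seq => m m_g.
by rewrite prod_scale g_hom // mulrCA.
Qed.

Definition wpoly al y g : {poly R} :=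
  \sum_(m <- msupp g) (g@_m * \prod_i y i ^+ m i) *: 'X^(wdeg al m).

Lemma horner_wpoly al y g u :
  (wpoly al y g).[u] = \sum_(m <- msupp g) g@_m * \prod_i y i ^+ m i * u ^+ wdeg al m.
Proof. by rewrite horner_sum; apply: eq_bigr => m _; rewrite hornerZ hornerXn. Qed.

Lemma coef_wpoly_eq0 al y g d : {in msupp g, forall m, wdeg al m != d} ->
  (wpoly al y g)`_d = 0.
Proof.
move=> g_d; rewrite coef_sum big_seq big1 // => m /g_d.
by rewrite coefZ coefXn eq_sym => /negbTE ->; rewrite mulr0.
Qed.

Lemma circle_monomial u v a b : u * v = 1 -> u ^+ a * v ^+ b = v ^+ (a + b) * u ^+ a.*2.
Proof.
move=> uv1; have vu1 : v ^+ a * u ^+ a = 1 by rewrite -exprMn mulrC uv1 expr1n.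
by rewrite -addnn !exprD -[LHS]mul1r -vu1; ring.
Qed.

Lemma meval_circle al be y u v g d : u * v = 1 ->
  {in msupp g, forall m, wdeg al m + wdeg be m = d}%N ->
  g.@[fun i => u ^+ al i * v ^+ be i * y i] =
  v ^+ d * (wpoly (fun i => (al i).*2) y g).[u].
Proof.
move=> uv1 g_d; rewrite meval_scale horner_wpoly mulr_sumr; apply: eq_big_seq => m m_g.
by rewrite circle_monomial // g_d // wdeg_double mulrCA.
Qed.

Lemma meval_eq_supp (x x' : 'I_k -> R) g :
  {in msupp g, forall (m : 'X_{1..k}) i, m i != 0%N -> x i = x' i} -> g.@[x] = g.@[x'].
Proof.
move=> eq_x; rewrite !mevalE; apply: eq_big_seq => m m_g; congr (_ * _).
apply: eq_bigr => i _; have [->|/eq_x ->] := eqVneq (m i) 0%N; by rewrite ?expr0.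
Qed.

End WeightedEvaluation.

Section UnitCircle.
Variable R : rcfType.
Implicit Types (u : R[i]) (H : {poly R[i]}).

Definition circ (k : nat) : R[i] := ((1 +i* k%:R)^* / (1 +i* k%:R))%C.

Lemma circ_den_neq0 k : (1 +i* k%:R)%C != 0 :> R[i].
Proof. by rewrite eq_complex /= oner_eq0. Qed.

Lemma conj_div_unit (x : R[i]) : x != 0 -> (x^*%C / x) * (x^*%C / x)^*%C = 1.
Proof.
move=> x_neq0; rewrite rmorphM fmorphV /= conjcK mulrA divfK //.
by rewrite divff ?conjc_eq0.
Qed.

Lemma circ_unit k : circ k * (circ k)^*%C = 1.
Proof. exact/conj_div_unit/circ_den_neq0. Qed.

Lemma circ_inj : injective circ.
Proof.
have circD1 k : circ k + 1 = 2%:R / (1 +i* k%:R)%C.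
  rewrite /circ -[X in _ + X](divff (circ_den_neq0 k)) -mulrDl addrC addcJ /=.
  by rewrite rmorph1 mulr1.
move=> k l /(congr1 (+%R^~ 1)); rewrite /= !circD1 => /(mulrI _).
rewrite unitfE pnatr_eq0 => /(_ isT) /invr_inj /(congr1 (@complex.Im R)) /= /eqP.
by rewrite eqr_nat => /eqP.
Qed.

Lemma i_half_neq0 : 'i%C / 2%:R != 0 :> R[i].
Proof. by rewrite mulf_neq0 ?invr_eq0 ?pnatr_eq0 // eq_complex /= oner_eq0 andbF. Qed.

Lemma ReB (x y : R[i]) : complex.Re (x - y) = complex.Re x - complex.Re y.
Proof. exact: raddfB. Qed.

Lemma Re_realM (r : R) (x : R[i]) : complex.Re (r%:C%C * x) = r * complex.Re x.
Proof. by case: x => a b /=; rewrite mul0r subr0. Qed.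

Lemma Re_eq0_addcJ (x : R[i]) : complex.Re x = 0 -> x + x^*%C = 0.
Proof. by rewrite addcJ => ->; rewrite rmorph0 mulr0. Qed.

Lemma circle_Re0_coef H d : (size H <= d.*2.+1)%N ->
  (forall u, u * u^*%C = 1 -> complex.Re (u^*%C ^+ d * H.[u]) = 0) ->
  H`_(d.*2) = - (H`_0)^*%C.
Proof.
move=> size_H H_Re.
pose H' := \poly_(a < d.*2.+1) (H`_(d.*2 - a))^*%C.
have H'E u : u * u^*%C = 1 -> H'.[u] = u ^+ d.*2 * (H.[u])^*%C.
  move=> uu; have uXB b c : (b <= c)%N -> u ^+ (c - b) = u ^+ c * u^*%C ^+ b.
    by move=> le_bc; rewrite -{2}(subnK le_bc) exprD -mulrA -exprMn uu expr1n mulr1.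
  rewrite horner_poly (horner_coef_wide _ size_H) rmorph_sum mulr_sumr.
  rewrite (reindex_inj rev_ord_inj); apply: eq_bigr => a _ /=.
  have a_le : (a <= d.*2)%N by rewrite -ltnS.
  by rewrite subSS subKn // rmorphM rmorphXn /= mulrCA uXB.
have H_root u : u * u^*%C = 1 -> (H + H').[u] = 0.
  move=> uu; have := Re_eq0_addcJ (H_Re u uu).
  move/(congr1 ( *%R (u ^+ d))); rewrite mulr0 => <-.
  rewrite hornerD H'E // rmorphM rmorphXn /= conjcK mulrDr mulrA -exprMn uu.
  by rewrite expr1n mul1r mulrA -exprD addnn.
have HH'0 : H + H' = 0.
  by apply: (poly_eq0_of_roots (@circ_inj)) => k; apply/rootP/H_root/circ_unit.
move: (congr1 (fun P : {poly R[i]} => P`_(d.*2)) HH'0).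
by rewrite /= coefD coef_poly ltnSn subnn coef0 => /eqP; rewrite addr_eq0 => /eqP.
Qed.

End UnitCircle.

Section Weights.
Variables (n : nat) (mexp : 'I_n -> nat).
Hypothesis mexp_gt0 : forall j, (0 < mexp j)%N.

(* The weights scaled by their common denominator wden: swt k = wden * delta k on
   (w, z), while hwt and awt give z_j, resp. conj(z_j), the scaled weight of z_j. *)
Definition wden : nat := \prod_(j < n) (2 * mexp j).
Definition zwt (j : 'I_n) : nat := \prod_(k < n | k != j) (2 * mexp k).
Definition swt (k : 'I_n.+1) : nat := if unlift ord0 k is Some j then zwt j else wden.
Definition hwt (k : 'I_(n + n)) : nat := if split k is inl j then zwt j else 0.
Definition awt (k : 'I_(n + n)) : nat := if split k is inr j then zwt j else 0.

Lemma zwtK j : (zwt j * (2 * mexp j))%N = wden.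
Proof. by rewrite /wden (bigD1 j) //= mulnC. Qed.

Lemma zwt_gt0 j : (0 < zwt j)%N.
Proof. by apply: prodn_cond_gt0 => k _; rewrite muln_gt0 mexp_gt0. Qed.

Lemma wden_gt0 : (0 < wden)%N.
Proof. by apply: prodn_gt0 => k; rewrite muln_gt0 mexp_gt0. Qed.

Lemma zwt_lt_wden j : (zwt j < wden)%N.
Proof. by rewrite -(zwtK j) -{1}[zwt j]muln1 ltn_pmul2l ?zwt_gt0 //; have := mexp_gt0 j; lia. Qed.

Lemma zwtE j : (zwt j)%:R = wden%:R * ((2 * mexp j)%N%:R)^-1 :> rat.
Proof.
by rewrite -(zwtK j) natrM mulfK // pnatr_eq0 -lt0n muln_gt0 mexp_gt0.
Qed.

Lemma wdeg_swtE m : wdeg swt m = (m ord0 * wden + \sum_(j < n) m (lift ord0 j) * zwt j)%N.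
Proof.
rewrite /wdeg big_ord_recl /swt unlift_none; congr (_ + _)%N.
by apply: eq_bigr => j _; rewrite liftK.
Qed.

Lemma wdeg_hwtE m : wdeg hwt m = (\sum_(j < n) m (lshift n j) * zwt j)%N.
Proof.
rewrite /wdeg big_split_ord /= [X in (_ + X)%N]big1 ?addn0 => [|j _].
  by apply: eq_bigr => j _; rewrite /hwt (unsplitK (inl _ j)).
by rewrite /hwt (unsplitK (inr _ j)) muln0.
Qed.

Lemma wdeg_awtE m : wdeg awt m = (\sum_(j < n) m (rshift n j) * zwt j)%N.
Proof.
rewrite /wdeg big_split_ord /= [X in (X + _)%N]big1 ?add0n => [|j _].
  by apply: eq_bigr => j _; rewrite /awt (unsplitK (inr _ j)).
by rewrite /awt (unsplitK (inl _ j)) muln0.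
Qed.

Lemma wtm_swt m : (wdeg swt m)%:R = wden%:R * wtm mexp m :> rat.
Proof.
rewrite wdeg_swtE /wtm big_ord_recl /delta unlift_none mulr1 mulrDr natrD natrM mulrC.
rewrite natr_sum mulr_sumr; congr (_ + _); apply: eq_bigr => j _.
by rewrite liftK natrM zwtE mulrCA.
Qed.

Lemma wtm2_hwt_awt m : (wdeg hwt m + wdeg awt m)%N%:R = wden%:R * wtm2 mexp m :> rat.
Proof.
rewrite wdeg_hwtE wdeg_awtE -big_split natr_sum /wtm2 mulr_sumr.
by apply: eq_bigr => j _; rewrite /= -mulnDl natrM zwtE natrD mulrCA.
Qed.

Lemma wtm_zwt m j : wtm mexp m = delta mexp (lift ord0 j) ->
  m ord0 = 0%N /\ wdeg swt m = zwt j.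
Proof.
move=> wt_m; have wdeg_m : wdeg swt m = zwt j.
  by apply/eqP; rewrite -(eqr_nat rat) wtm_swt wt_m zwtE /delta liftK.
split=> //; move: wdeg_m (zwt_lt_wden j); rewrite wdeg_swtE; nia.
Qed.

Lemma wtm_wden m : wtm mexp m = delta mexp ord0 -> m != U_(ord0)%MM ->
  m ord0 = 0%N /\ wdeg swt m = wden.
Proof.
move=> wt_m m_neqU; have wdeg_m : wdeg swt m = wden.
  by apply/eqP; rewrite -(eqr_nat rat) wtm_swt wt_m /delta unlift_none mulr1.
split=> //; apply/eqP; apply: contraNT m_neqU => m0_neq0.
move: wdeg_m; rewrite wdeg_swtE => wdeg_m.
have m0 : m ord0 = 1%N by move: wden_gt0 m0_neq0; nia.
have /eqP : (\sum_(j < n) m (lift ord0 j) * zwt j = 0)%N by move: wdeg_m; rewrite m0; lia.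
rewrite sum_nat_eq0 => /forallP m_lift; apply/eqP/mnmP => i; rewrite mnm1E.
case: (unliftP ord0 i) => [j ->|->]; last by rewrite m0.
by move: (m_lift j) (zwt_gt0 j); rewrite /= muln_eq0 => /orP[/eqP ->|/eqP ->].
Qed.

Lemma wtm2_mixed m : wtm2 mexp m = 1 ->
  (exists j, 0 < m (lshift n j))%N -> (exists j, 0 < m (rshift n j))%N ->
  [/\ (wdeg hwt m + wdeg awt m)%N = wden, (0 < wdeg hwt m)%N & (0 < wdeg awt m)%N].
Proof.
move=> wt_m [jh mh_gt0] [ja ma_gt0]; split.
- by apply/eqP; rewrite -(eqr_nat rat) wtm2_hwt_awt wt_m mulr1.
- rewrite wdeg_hwtE (bigD1 jh) //=; apply: leq_trans (leq_addr _ _).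
  by rewrite muln_gt0 mh_gt0 zwt_gt0.
- rewrite wdeg_awtE (bigD1 ja) //=; apply: leq_trans (leq_addr _ _).
  by rewrite muln_gt0 ma_gt0 zwt_gt0.
Qed.

End Weights.

Section Tangency.
Variables (R : realType) (n : nat) (mexp : 'I_n -> nat).
Hypothesis mexp_gt0 : forall j, (0 < mexp j)%N.
Variables (p : {mpoly R[i][n + n]}) (q : 'I_n.+1 -> {mpoly R[i][n.+1]}).
Hypothesis p_adm : admissible_p mexp p.
Hypothesis q_hom : forall k, whomog mexp (0 + delta mexp k) (q k).

Local Notation N := (wden mexp).
Local Notation zwt := (zwt mexp).
Local Notation pM j := (p^`M(lshift n j)).
Local Notation c0 := (q ord0)@_U_(ord0).
Local Notation f := (q ord0 - c0 *: 'X_ord0).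

Definition tangency (x : 'I_n.+1 -> R[i]) : R[i] :=
  - ('i%C / 2%:R) * (q ord0).@[x]
  + \sum_(j < n) (q (lift ord0 j)).@[x] * (pM j).@[zzbar (zpart x)].

Hypothesis q_tan : forall x, bdry_Omega p x -> complex.Re (tangency x) = 0.

Definition wpt (w : R[i]) (z : 'I_n -> R[i]) : 'I_n.+1 -> R[i] :=
  fun k => if unlift ord0 k is Some j then z j else w.
Definition bdry_pt (t : R) (z : 'I_n -> R[i]) := wpt (t%:C - 'i%C * p.@[zzbar z])%C z.
Definition rot (u : R[i]) (z : 'I_n -> R[i]) : 'I_n -> R[i] := fun j => u ^+ zwt j * z j.

Lemma wpt_ord0 w z : wpt w z ord0 = w.
Proof. by rewrite /wpt unlift_none. Qed.

Lemma wpt_lift w z j : wpt w z (lift ord0 j) = z j.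
Proof. by rewrite /wpt liftK. Qed.

Lemma zzbar_zpart_wpt w z : zzbar (zpart (wpt w z)) =1 zzbar z.
Proof. by move=> k; rewrite /zzbar /zpart; case: (split k) => j; rewrite wpt_lift. Qed.

Lemma bdry_Omega_pt t z : bdry_Omega p (bdry_pt t z).
Proof.
have [p_real _ _] := p_adm.
rewrite /bdry_Omega /bdry_pt wpt_ord0 (meval_eq _ (zzbar_zpart_wpt _ z)).
move: (p_real z); case: (p.@[zzbar z]) => a b /= ->.
by apply/eqP; rewrite eq_complex /=; apply/andP; split; apply/eqP; ring.
Qed.

Lemma meval_wfree g x z : {in msupp g, forall m : 'X_{1..n.+1}, m ord0 = 0%N} ->
  (forall j, x (lift ord0 j) = z j) -> g.@[x] = g.@[wpt 0 z].
Proof.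
move=> g_wfree x_z; apply: meval_eq_supp => m m_g i.
by case: (unliftP ord0 i) => [j ->|->]; rewrite ?x_z ?wpt_lift ?g_wfree ?eqxx.
Qed.

Lemma f_supp m : m \in msupp f -> m ord0 = 0%N /\ wdeg (swt mexp) m = N.
Proof.
rewrite mcoeff_msupp mcoeffB mcoeffZ mcoeffX.
have [<-|m_neqU] := eqVneq U_(ord0)%MM m; first by rewrite mulr1 subrr eqxx.
rewrite mulr0 subr0 -mcoeff_msupp => /q_hom; rewrite add0r => wt_m.
by apply: wtm_wden; rewrite // eq_sym.
Qed.

Lemma q_lift_supp j m : m \in msupp (q (lift ord0 j)) ->
  m ord0 = 0%N /\ wdeg (swt mexp) m = zwt j.
Proof. by move=> /q_hom; rewrite add0r; apply: wtm_zwt. Qed.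

Lemma p_supp m : m \in msupp p ->
  [/\ (wdeg (hwt mexp) m + wdeg (awt mexp) m)%N = N,
      (0 < wdeg (hwt mexp) m)%N & (0 < wdeg (awt mexp) m)%N].
Proof.
have [_ p_wt p_mixed] := p_adm => m_p.
by have [? ?] := p_mixed m m_p; apply: wtm2_mixed; rewrite ?p_wt.
Qed.

Lemma pM_supp j m : m \in msupp (pM j) ->
  (wdeg (hwt mexp) m + wdeg (awt mexp) m + zwt j)%N = N /\ (0 < wdeg (awt mexp) m)%N.
Proof.
rewrite !mcoeff_msupp mcoeff_deriv => m_pM.
have /p_supp[] : (m + U_(lshift n j))%MM \in msupp p.
  by rewrite mcoeff_msupp; apply: contraNneq m_pM => ->; rewrite mul0rn.
rewrite !wdegD !wdegU /hwt /awt (unsplitK (inl _ j)) => <- _.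
by rewrite addn0; split=> //; lia.
Qed.

Lemma q0_split : q ord0 = c0 *: 'X_ord0 + f.
Proof. by rewrite addrC subrK. Qed.

Lemma wpt0_rot u z : wpt 0 (rot u z) =1 (fun k => u ^+ swt mexp k * wpt 0 z k).
Proof. by move=> k; rewrite /wpt /swt; case: (unlift ord0 k) => [j|] //; rewrite mulr0. Qed.

Lemma zzbar_rot u z :
  zzbar (rot u z) =1 (fun k => u ^+ hwt mexp k * u^*%C ^+ awt mexp k * zzbar z k).
Proof.
move=> k; rewrite /zzbar /hwt /awt /rot; case: (split k) => j; first by rewrite expr0 mulr1.
by rewrite expr0 mul1r rmorphM rmorphXn.
Qed.

Lemma meval_rot g d w u z :
  {in msupp g, forall m : 'X_{1..n.+1}, m ord0 = 0%N /\ wdeg (swt mexp) m = d} ->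
  g.@[wpt w (rot u z)] = u ^+ d * g.@[wpt 0 z].
Proof.
move=> g_hom; rewrite (meval_wfree _ (wpt_lift w (rot u z))) => [|m /g_hom[] //].
by rewrite (meval_eq _ (wpt0_rot u z)); apply: meval_homog => m /g_hom[].
Qed.

Local Notation hwt2 := (fun k => (hwt mexp k).*2).

Lemma meval_zzbar_rot g d u z : u * u^*%C = 1 ->
  {in msupp g, forall m, wdeg (hwt mexp) m + wdeg (awt mexp) m = d}%N ->
  g.@[zzbar (rot u z)] = u^*%C ^+ d * (wpoly hwt2 (zzbar z) g).[u].
Proof. by move=> uu g_d; rewrite (meval_eq _ (zzbar_rot u z)) (meval_circle _ uu g_d). Qed.

Definition mixed_poly z : {poly R[i]} :=
  (- ('i%C / 2%:R) * c0 * - 'i%C) *: wpoly hwt2 (zzbar z) p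
  + \sum_(j < n) (q (lift ord0 j)).@[wpt 0 z] *:
                   ('X^((zwt j).*2) * wpoly hwt2 (zzbar z) (pM j)).

Definition tangency_poly z : {poly R[i]} :=
  (- ('i%C / 2%:R) * f.@[wpt 0 z]) *: 'X^(N.*2) + mixed_poly z.

Lemma coef_mixed_poly z k : (k == 0%N) || (N.*2 <= k)%N -> (mixed_poly z)`_k = 0.
Proof.
move=> k_out; rewrite coefD coefZ coef_wpoly_eq0 ?mulr0 ?add0r ?coef_sum.
  apply: big1 => j _; rewrite coefZ coefXnM; case: ltnP => [_|k_ge]; first by rewrite mulr0.
  rewrite coef_wpoly_eq0 ?mulr0 // => m /pM_supp[wt_m awt_gt0]; rewrite wdeg_double.
  by move: (zwt_gt0 mexp_gt0 j) k_out k_ge; lia.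
by move=> m /p_supp[wt_m hwt_gt0 awt_gt0]; rewrite wdeg_double; move: k_out; lia.
Qed.

Lemma tangency_term_rot j w z u : u * u^*%C = 1 ->
  (q (lift ord0 j)).@[wpt w (rot u z)] * (pM j).@[zzbar (zpart (wpt w (rot u z)))] =
  u^*%C ^+ N * ((q (lift ord0 j)).@[wpt 0 z]
                * (u ^+ (zwt j).*2 * (wpoly hwt2 (zzbar z) (pM j)).[u])).
Proof.
move=> uu; rewrite (meval_rot _ _ _ (@q_lift_supp j)) (meval_eq _ (zzbar_zpart_wpt _ _)).
rewrite (@meval_zzbar_rot _ (N - zwt j)) => [|//|m /pM_supp[<- _]]; last by rewrite addnK.
have := circle_monomial (zwt j) (N - zwt j) uu.
rewrite subnKC ?(ltnW (zwt_lt_wden mexp_gt0 j)) // => uv_N.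
transitivity ((q (lift ord0 j)).@[wpt 0 z] * (u ^+ zwt j * u^*%C ^+ (N - zwt j))
              * (wpoly hwt2 (zzbar z) (pM j)).[u]); first by ring.
by rewrite uv_N; ring.
Qed.

Lemma horner_tangency_poly z u : (tangency_poly z).[u] =
  - ('i%C / 2%:R) * f.@[wpt 0 z] * u ^+ N.*2
  + (- ('i%C / 2%:R) * c0 * - 'i%C * (wpoly hwt2 (zzbar z) p).[u]
     + \sum_(j < n) (q (lift ord0 j)).@[wpt 0 z]
                    * (u ^+ (zwt j).*2 * (wpoly hwt2 (zzbar z) (pM j)).[u])).
Proof.
rewrite /tangency_poly /mixed_poly hornerD hornerZ hornerXn hornerD hornerZ; congr (_ + (_ + _)).
by rewrite horner_sum; apply: eq_bigr => j _; rewrite hornerZ hornerM hornerXn.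
Qed.

Lemma tangency_rot z u : u * u^*%C = 1 ->
  tangency (bdry_pt 0 (rot u z)) = u^*%C ^+ N * (tangency_poly z).[u].
Proof.
move=> uu; rewrite /tangency /bdry_pt.
under eq_bigr do rewrite tangency_term_rot //.
have p_rot : p.@[zzbar (rot u z)] = u^*%C ^+ N * (wpoly hwt2 (zzbar z) p).[u].
  by apply: meval_zzbar_rot => // m /p_supp[].
have uN : u ^+ N = u^*%C ^+ N * u ^+ N.*2.
  by rewrite -[LHS]mulr1 -(expr0 u^*%C) circle_monomial ?addn0.
rewrite -mulr_sumr {1}q0_split mevalD mevalZ mevalXU wpt_ord0 (meval_rot _ _ _ f_supp).
by rewrite horner_tangency_poly p_rot rmorph0 uN; ring.
Qed.

Lemma coef_tangency_poly z k :
  (tangency_poly z)`_k = - ('i%C / 2%:R) * f.@[wpt 0 z] * (k == N.*2)%:R + (mixed_poly z)`_k.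
Proof. by rewrite /tangency_poly coefD coefZ coefXn. Qed.

Lemma f_wpt0 z : f.@[wpt 0 z] = 0.
Proof.
have size_tangency_poly : (size (tangency_poly z) <= N.*2.+1)%N.
  apply/leq_sizeP => k k_gt; rewrite coef_tangency_poly coef_mixed_poly ?(ltnW k_gt) ?orbT //.
  by rewrite gtn_eqF // mulr0 addr0.
have tangency_poly_Re u : u * u^*%C = 1 -> complex.Re (u^*%C ^+ N * (tangency_poly z).[u]) = 0.
  by move=> uu; rewrite -tangency_rot // q_tan //; apply: bdry_Omega_pt.
have := circle_Re0_coef size_tangency_poly tangency_poly_Re.
rewrite !coef_tangency_poly !coef_mixed_poly ?leqnn ?orbT // eqxx mulr1 addr0 eq_sym double_eq0.
rewrite (negbTE (lt0n_neq0 (wden_gt0 mexp_gt0))) mulr0 addr0 rmorph0 oppr0 => /eqP.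
by rewrite mulf_eq0 oppr_eq0 (negbTE (i_half_neq0 R)) => /eqP.
Qed.

Lemma q0_linear : q ord0 = c0 *: 'X_ord0.
Proof.
apply/eqP; rewrite -subr_eq0; apply/eqP/mpoly_eq0_of_meval0 => x.
by rewrite (@meval_wfree _ x (zpart x)) ?f_wpt0 // => m /f_supp[].
Qed.

Lemma tangency_bdry_pt t z :
  tangency (bdry_pt t z) = tangency (bdry_pt 0 z) - (t / 2%:R)%:C%C * (c0 * 'i%C).
Proof.
set c := c0; rewrite /tangency /bdry_pt q0_linear -/c !mevalZ !mevalXU !wpt_ord0 rmorph0.
have sum_bpt w : \sum_(j < n) (q (lift ord0 j)).@[wpt w z] * (pM j).@[zzbar (zpart (wpt w z))]
    = \sum_(j < n) (q (lift ord0 j)).@[wpt 0 z] * (pM j).@[zzbar z].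
  apply: eq_bigr => j _; rewrite (meval_eq _ (zzbar_zpart_wpt _ _)).
  by rewrite (meval_wfree _ (wpt_lift w z)) // => m /q_lift_supp[].
by rewrite !sum_bpt rmorphM fmorphV rmorph_nat; ring.
Qed.

Lemma c0_real : c0 = (complex.Re c0)%:C%C.
Proof.
have /eqP := q_tan (bdry_Omega_pt 1 (fun=> 0)).
rewrite tangency_bdry_pt ReB (q_tan (bdry_Omega_pt 0 _)) Re_realM ReiNIm sub0r mulrN opprK.
rewrite mulf_eq0 mul1r invr_eq0 pnatr_eq0 /= => /eqP Im_c0.
by rewrite [LHS]complexE Im_c0 rmorph0 mulr0 addr0.
Qed.

End Tangency.

Theorem lemma3p1 (R : realType) (n : nat) (mexp : 'I_n -> nat)
  (p : {mpoly R[i][n + n]}) (q : 'I_n.+1 -> {mpoly R[i][n.+1]}) :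
  (forall j, (0 < mexp j)%N) ->
  admissible_p mexp p ->
  in_A mexp p 0 q ->
  exists (c : R) (l : 'I_n -> {mpoly R[i][n.+1]}),
    (forall j a, a \in msupp (l j) -> a ord0 = 0%N) /\
    q ord0 = c%:C%C *: 'X_ord0 /\
    (forall j : 'I_n,
       q (lift ord0 j) = (c%:C%C * ratr (delta mexp (lift ord0 j))) *: 'X_(lift ord0 j) + l j).
Proof.
move=> mexp_gt0 p_adm [q_hom q_tan].
have c_real := c0_real mexp_gt0 p_adm q_hom q_tan.
set c := complex.Re _ in c_real.
exists c, (fun j => q (lift ord0 j)
                   - (c%:C%C * ratr (delta mexp (lift ord0 j))) *: 'X_(lift ord0 j)).
split; [|split].
- move=> j m; rewrite mcoeff_msupp mcoeffB mcoeffZ mcoeffX.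
  have [<-|m_neqU] := eqVneq U_(lift ord0 j)%MM m.
    by move=> _; rewrite mnm1E eq_sym (negbTE (neq_lift _ _)).
  by rewrite mulr0 subr0 -mcoeff_msupp => /(q_lift_supp mexp_gt0 q_hom)[].
- by rewrite -c_real; exact: (q0_linear mexp_gt0 p_adm q_hom q_tan).
- by move=> j; rewrite addrC subrK.
Qed.
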